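(* Let $a=(w_1,\dots,w_n)$ be a weak CLT sentence in which every $w_i$ is a closed word with first letter $1$. Then $\mathrm{wt}(a)\le 1+\sum_{i=1}^n\frac{\ell(w_i)-2}{2}$.
   Context: A word is a finite sequence $w=(s_1,\dots,s_m)$ of positive integers; $\ell(w)=m$; closed means $s_1=s_m$. Its edges are $E_w=\{\{s_i,s_{i+1}\}:1\le i\le m-1\}$ (undirected, self edges allowed), and $N_e^w=\#\{i\le m-1:\{s_i,s_{i+1}\}=e\}$. A sentence is a finite sequence $a=(w_1,\dots,w_n)$ of words; $\mathrm{wt}(a)$ is the number of distinct letters appearing in $a$, $E_a=\bigcup_i E_{w_i}$, $N_e^a=\sum_iN_e^{w_i}$. $a$ is a weak CLT sentence if (S1) $N_e^a\ge2$ for all $e\in E_a$ and (S2) for every $i$ there is $j\ne i$ with $E_{w_i}\cap E_{w_j}\ne\emptyset$. *)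

From mathcomp Require Import all_boot all_order all_algebra.
Set Implicit Arguments. Unset Strict Implicit. Unset Printing Implicit Defensive.

Definition word := seq nat.
Definition sentence := seq word.

Definition is_word (w : word) : bool := all (fun s => 0 < s) w.

(* An undirected edge {x,y} is represented canonically as (min x y, max x y). *)
Definition uedge (x y : nat) : nat * nat := (minn x y, maxn x y).

Definition edges_list (w : word) : seq (nat * nat) :=
  match w with
  | [::] => [::]
  | x :: t => pairmap uedge x t
  end.

Definition Ew (w : word) : pred (nat * nat) := fun e => e \in edges_list w.

Definition Nw (w : word) (e : nat * nat) : nat := count_mem e (edges_list w).

Definition closed_word (w : word) : bool :=
  match w with
  | [::] => false
  | x :: t => x == last x t
  end.

Definition starts_with_one (w : word) : bool := head 0 w == 1.

Definition Ea (a : sentence) : seq (nat * nat) := flatten (map edges_list a).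

Definition Na (a : sentence) (e : nat * nat) : nat := \sum_(w <- a) Nw w e.

Definition wt (a : sentence) : nat := size (undup (flatten a)).

Definition weak_CLT (a : sentence) : Prop :=
  (forall e, e \in Ea a -> 2 <= Na a e) /\
  (forall i, i < size a ->
     exists2 j, (j < size a) && (j != i) &
       has (fun e => e \in edges_list (nth [::] a j)) (edges_list (nth [::] a i))).

From mathcomp Require Import all_boot all_order all_algebra zify ring lra.
Set Implicit Arguments. Unset Strict Implicit. Unset Printing Implicit Defensive.

(* Let L be the concatenation of the words of a.  Every letter x <> 1 has a
   parent: the letter just before the first occurrence of x in L.
   Since every word starts with 1, a letter x <> 1 is never the first letter of
   a word, so {parent x, x} is an edge of a; and the parent occurs earlier, so
   these wt(a) - 1 edges form a spanning tree F rooted at 1.  A closed word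
   using only edges of F crosses every edge of F an even number of times
   (count how often it crosses the cut that edge defines).  Hence each edge of
   F occurs at least twice, plus once more for each tree-only word that shares
   it with another word (S2 forces every tree-only word to share some edge),
   while every other word contributes an edge outside F.  This gives
   2 (wt(a) - 1) + n <= #edges = sum (l(w_i) - 1). *)

Lemma uedge_cut (phi : pred nat) x y :
  (phi (uedge x y).1 != phi (uedge x y).2) = (phi x != phi y).
Proof.
rewrite /uedge /minn /maxn /=; case: ltnP => //= _.
by case: (phi x); case: (phi y).
Qed.

Lemma odd_count_cut_pairmap (phi : pred nat) x s :
  odd (count (fun e => phi e.1 != phi e.2) (pairmap uedge x s))
  = (phi x != phi (last x s)).
Proof.
elim: s x => [|y s IHs] x /=; first by case: (phi x).
rewrite oddD IHs uedge_cut.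
by case: (phi x); case: (phi y); case: (phi (last y s)).
Qed.

Lemma even_count_cut_closed (phi : pred nat) w : closed_word w ->
  ~~ odd (count (fun e => phi e.1 != phi e.2) (edges_list w)).
Proof. by case: w => [|x s] //= /eqP xE; rewrite odd_count_cut_pairmap -xE eqxx. Qed.

Lemma uedge_eq x y x' y' :
  uedge x y = uedge x' y' -> (x = x' /\ y = y') \/ (x = y' /\ y = x').
Proof. rewrite /uedge => -[]; lia. Qed.

Section ParentForest.

Variables (P d : nat -> nat) (D : pred nat).
Hypothesis depth_parent : forall x, D x -> d (P x) < d x.

Lemma uedge_parent_inj : {in D &, injective (fun x => uedge (P x) x)}.
Proof.
move=> x y Dx Dy /uedge_eq [[_ //]|[Px Py]].
by have := depth_parent Dx; have := depth_parent Dy; rewrite Px -Py; lia.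
Qed.

Variable z : nat.
Hypothesis Dz : D z.

Fixpoint descends k y :=
  (y == z) || (if k is k'.+1 then D y && descends k' (P y) else false).

Definition in_subtree y := descends (d y) y.

Lemma descends_succ k y : descends k.+1 y = (y == z) || D y && descends k (P y).
Proof. by []. Qed.

Lemma descendsS k y : d y <= k -> descends k.+1 y = descends k y.
Proof.
elim: k y => [|k IHk] y le_dy.
  by rewrite descends_succ /=; case Dy: (D y) => //; have := depth_parent Dy; lia.
rewrite [LHS]descends_succ [RHS]descends_succ; case Dy: (D y) => //; rewrite IHk //.
by have := depth_parent Dy; lia.
Qed.

Lemma descends_depth k y : d y <= k -> descends k y = in_subtree y.
Proof.
elim: k => [|k IHk] le_dy; first by rewrite /in_subtree; have -> : d y = 0 by lia.
by case: (ltngtP (d y) k.+1) => [lt_dy|gt_dy|<-//]; [rewrite descendsS ?IHk | lia].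
Qed.

Lemma in_subtreeE y : D y -> in_subtree y = (y == z) || in_subtree (P y).
Proof.
move=> Dy; have := depth_parent Dy; rewrite /in_subtree.
case: (d y) => [|k] lt_dP //=; by rewrite Dy descends_depth.
Qed.

Lemma descends_depth_ge k y : descends k y -> d z <= d y.
Proof.
elim: k y => [|k IHk] y /=; first by rewrite orbF => /eqP->.
by case/orP => [/eqP-> //|/andP[Dy /IHk]]; have := depth_parent Dy; lia.
Qed.

Lemma cut_parent_edge y : D y -> (in_subtree (P y) != in_subtree y) = (y == z).
Proof.
move=> Dy; rewrite (in_subtreeE Dy); case: (eqVneq y z) => [->|_]; last by rewrite eqxx.
suff -> : in_subtree (P z) = false by [].
by apply/negP => /descends_depth_ge; have := depth_parent Dz; lia.
Qed.

Lemma even_count_parent_edge (X : seq nat) w :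
  all D X -> closed_word w ->
  {subset edges_list w <= [seq uedge (P x) x | x <- X]} ->
  ~~ odd (count_mem (uedge (P z) z) (edges_list w)).
Proof.
move=> /allP DX closed_w sub_w.
rewrite (eq_in_count (a2 := fun e => in_subtree e.1 != in_subtree e.2)).
  exact: even_count_cut_closed.
move=> _ /sub_w/mapP[y yX ->]; rewrite uedge_cut cut_parent_edge ?DX //.
by apply/eqP/eqP => [/(uedge_parent_inj (DX y yX) Dz)|->].
Qed.

End ParentForest.

Lemma add2_card_le_sum (I : finType) (c : I -> nat) (K : {set I}) :
  {in K, forall i, 2 <= c i} ->
  {in K, forall i, exists2 j, j != i & 0 < c j} ->
  2 <= \sum_i c i -> 2 + #|K| <= \sum_i c i.
Proof.
move=> ge2 partner ge2_sum.
have [->|[i iK]] := set_0Vmem K; first by rewrite cards0 addn0.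
have [j ji cj] := partner i iK.
have sumKj : 2 * #|K :\ j| <= \sum_(k | k != j) c k.
  rewrite mulnC -sum_nat_const big_mkcond [leqRHS]big_mkcond leq_sum // => k _.
  by rewrite in_setD1; case: (k != j) => //=; case: ifP => // /ge2.
have Kj0 : 0 < #|K :\ j| by apply/card_gt0P; exists i; rewrite in_setD1 eq_sym ji.
have := cardsD1 j K; rewrite (bigD1 j) //=.
by case: (boolP (j \in K)) => [jK|jK] /=; [have := ge2 _ jK|]; lia.
Qed.

Lemma count_mem_sum (T : eqType) (s' s : seq T) : uniq s' ->
  count (mem s') s = \sum_(e <- s') count_mem e s.
Proof.
move=> uniq_s'; elim: s => [|x s IHs] /=; first by rewrite big1.
rewrite IHs big_split /=; congr (_ + _).
by rewrite -count_uniq_mem // -sum1_count big_mkcond; apply: eq_bigr => e _; rewrite eq_sym.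
Qed.

Section Sentence.

Variable a : sentence.
Hypothesis closed_from1 : forall w, w \in a -> closed_word w && starts_with_one w.

Let L := flatten a.

Lemma pairmap_uedge_flatten :
  pairmap uedge 1 L = flatten [seq uedge 1 1 :: edges_list w | w <- a].
Proof.
rewrite /L; elim: a closed_from1 => [|w a' IHa] //= closed_a'.
have /andP[closed_w /eqP w1] := closed_a' w (mem_head _ _).
case: w w1 closed_w closed_a' => [|x t] //= -> /eqP t1 closed_a'.
rewrite pairmap_cat -t1 IHa // => v va'; apply: closed_a'.
by rewrite inE va' orbT.
Qed.

(* Prepending the root 1 makes [nth 0 (1 :: L) k] the letter preceding
   position k of L. *)
Definition depth x := index x (1 :: L).
Definition parent x := nth 0 (1 :: L) (index x L).
Definition nonroot x := (x \in L) && (x != 1).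

Lemma depth_parent x : nonroot x -> depth (parent x) < depth x.
Proof.
case/andP => xL x1; have -> : depth x = (index x L).+1 by rewrite /depth /= eq_sym (negPf x1).
by rewrite ltnS; apply: index_nth; rewrite /= ltnS index_size.
Qed.

Lemma parent_edge_mem x : nonroot x -> uedge (parent x) x \in Ea a.
Proof.
case/andP => xL x1; have lt_xL : index x L < size L by rewrite index_mem.
have : uedge (parent x) x \in pairmap uedge 1 L.
  have -> : uedge (parent x) x = nth (0, 0) (pairmap uedge 1 L) (index x L).
    by rewrite (nth_pairmap 0) // nth_index.
  by rewrite mem_nth ?size_pairmap.
rewrite pairmap_uedge_flatten => /flattenP[_ /mapP[w wa ->]].
rewrite inE => /predU1P[/uedge_eq|ew]; first by case=> -[_ x1E]; rewrite x1E in x1.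
by apply/flattenP; exists (edges_list w); rewrite ?map_f.
Qed.

Definition tree_letters := [seq x <- undup L | x != 1].
Definition tree_edges := [seq uedge (parent x) x | x <- tree_letters].

Lemma all_nonroot_tree_letters : all nonroot tree_letters.
Proof. by apply/allP => x; rewrite mem_filter mem_undup /nonroot andbC. Qed.

Lemma uniq_tree_edges : uniq tree_edges.
Proof.
rewrite map_inj_in_uniq ?filter_uniq ?undup_uniq //.
move: all_nonroot_tree_letters => /allP nonroot_X x y /nonroot_X Dx /nonroot_X Dy.
exact: (uedge_parent_inj depth_parent Dx Dy).
Qed.

Lemma tree_edges_sub : {subset tree_edges <= Ea a}.
Proof.
move=> _ /mapP[x xX ->]; apply: parent_edge_mem.
by move/allP: all_nonroot_tree_letters; apply.
Qed.

Lemma wt_le_tree_edges : wt a <= (size tree_edges).+1.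
Proof.
rewrite /wt size_map size_filter -/L -(count_predC (fun x => x != 1)).
rewrite -[leqRHS]addn1 leq_add2l (eq_count (a2 := pred1 1)) => [|x /=]; last first.
  by rewrite negbK.
by rewrite count_uniq_mem ?undup_uniq ?leq_b1.
Qed.

Let n := size a.
Let W i := nth [::] a i.

Lemma count_Ea p : count p (Ea a) = \sum_(i < n) count p (edges_list (W i)).
Proof. by rewrite /Ea count_flatten sumnE !big_map (big_nth [::]) big_mkord. Qed.

Lemma Na_count_mem e : Na a e = count_mem e (Ea a).
Proof. by rewrite count_Ea /Na /Nw (big_nth [::]) big_mkord. Qed.

Definition tree_word (i : 'I_n) := all (mem tree_edges) (edges_list (W i)).

Definition shared_tree_words e := [set i : 'I_n | tree_word i &&
  (e \in edges_list (W i)) && [exists j : 'I_n, (j != i) && (e \in edges_list (W j))]].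

Lemma even_count_tree_word (i : 'I_n) e : tree_word i -> e \in tree_edges ->
  ~~ odd (count_mem e (edges_list (W i))).
Proof.
move=> /allP tree_i /mapP[z zX ->]; have /allP nonroot_X := all_nonroot_tree_letters.
apply: (even_count_parent_edge depth_parent (nonroot_X z zX) all_nonroot_tree_letters).
  by have /closed_from1/andP[] : W i \in a by apply: mem_nth.
by move=> f /tree_i.
Qed.

Lemma add2_card_shared_le_Na e : (forall e, e \in Ea a -> 2 <= Na a e) ->
  e \in tree_edges -> 2 + #|shared_tree_words e| <= Na a e.
Proof.
move=> S1 eF; have := S1 e (tree_edges_sub eF).
rewrite Na_count_mem count_Ea; apply: add2_card_le_sum => i.
  rewrite inE => /andP[/andP[tree_i ei] _].
  have := even_count_tree_word tree_i eF.
  have : 0 < count_mem e (edges_list (W i)) by rewrite -has_count has_pred1.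
  by case: (count_mem _ _) => [|[|k]].
rewrite inE => /andP[_ /existsP[j /andP[ji ej]]]; exists j => //.
by rewrite -has_count has_pred1.
Qed.

Lemma card_tree_words_le_shared :
  (forall i, i < n -> exists2 j, (j < n) && (j != i) &
     has (fun e => e \in edges_list (W j)) (edges_list (W i))) ->
  #|[set i | tree_word i]| <= \sum_(e <- tree_edges) #|shared_tree_words e|.
Proof.
move=> S2; rewrite -sum1_card big_mkcond /=.
under [leqRHS]eq_bigr do rewrite -sum1_card big_mkcond /=.
rewrite exchange_big leq_sum // => i _; rewrite inE.
case tree_i: (tree_word i) => //; rewrite -big_mkcond sum1_count -has_count.
have [j /andP[jn ji] /hasP[e ei ej]] := S2 i (ltn_ord i).
apply/hasP; exists e; first by move/allP: tree_i; apply.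
change (i \in shared_tree_words e); rewrite inE tree_i ei /=.
by apply/existsP; exists (Ordinal jn); rewrite ej andbT; apply: contra ji => /eqP <-.
Qed.

Lemma card_nontree_words_le :
  #|~: [set i | tree_word i]| <= count (predC (mem tree_edges)) (Ea a).
Proof.
rewrite -sum1_card count_Ea big_mkcond /= leq_sum // => i _.
rewrite !inE; case tree_i: (tree_word i) => //=.
by rewrite -has_count has_predC; apply: negbT.
Qed.

Lemma tree_edges_count_le : weak_CLT a -> 2 * size tree_edges + n <= size (Ea a).
Proof.
case=> S1 S2.
rewrite -[size (Ea a)](count_predC (mem tree_edges)) count_mem_sum ?uniq_tree_edges //.
have shared_le : \sum_(e <- tree_edges) (2 + #|shared_tree_words e|)
                 <= \sum_(e <- tree_edges) count_mem e (Ea a).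
  rewrite big_seq [leqRHS]big_seq leq_sum // => e eF.
  by rewrite -Na_count_mem add2_card_shared_le_Na.
rewrite big_split /= big_const_seq iter_addn_0 count_predT in shared_le.
rewrite -(card_ord n) -(cardsC [set i | tree_word i]) addnA leq_add //.
by rewrite (leq_trans _ shared_le) // leq_add2l card_tree_words_le_shared.
exact: card_nontree_words_le.
Qed.

Lemma size_Ea_add_size : size (Ea a) + n = \sum_(w <- a) size w.
Proof.
rewrite /n /Ea; elim: a closed_from1 => [|w a' IHa] closed_a'; first by rewrite big_nil.
rewrite /= big_cons -IHa => [|v va']; last by apply: closed_a'; rewrite inE va' orbT.
have /andP[+ _] := closed_a' w (mem_head _ _).
by case: w {closed_a'} => [|x t] //= _; rewrite size_cat size_pairmap; lia.
Qed.

End Sentence.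

Import GRing.Theory Num.Theory.
Local Open Scope ring_scope.

Lemma sum_size_sub2_half (a : sentence) :
  \sum_(w <- a) (((size w)%:R - 2) / 2 : rat)
  = ((\sum_(w <- a) size w)%N%:R - 2 * (size a)%:R) / 2.
Proof.
elim: a => [|w a IHa]; first by rewrite !big_nil mulr0 subr0 mul0r.
by rewrite !big_cons IHa natrD /= -addn1 natrD; field.
Qed.

Theorem mainTheorem4 (a : sentence) :
  all is_word a ->
  weak_CLT a ->
  (forall w, w \in a -> closed_word w && starts_with_one w) ->
  ((wt a)%:R : rat) <= 1 + \sum_(w <- a) (((size w)%:R - 2) / 2).
Proof.
move=> _ clt closed_from1.
have count_le := tree_edges_count_le closed_from1 clt.
have wt_le := wt_le_tree_edges a.
have size_E := size_Ea_add_size closed_from1.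
have nat_bound : (2 * wt a + 2 * size a <= 2 + \sum_(w <- a) size w)%N by lia.
have : ((2 * wt a + 2 * size a)%N%:R : rat) <= (2 + \sum_(w <- a) size w)%N%:R.
  by rewrite ler_nat.
rewrite sum_size_sub2_half !natrD; lra.
Qed.
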